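(* Let $M$ be a timelike surface in $\mathbb{R}^{n,1}$ with a canonical null direction with respect to a constant unit spacelike vector $Z$, let $W$ be the lightlike tangent vector field on $M$ with $\langle Z^\top,W\rangle=-1$, and let $a:=\langle II(W,W),Z^\perp\rangle$. Then $$\nabla_{Z^{\top}}Z^{\top}=0,\quad \nabla_{Z^{\top}}W=0,\quad \nabla_WZ^{\top}=-aZ^{\top},\quad \nabla_WW=aW,$$ and consequently $[Z^{\top},W]=aZ^{\top}$.
   Context: $\mathbb{R}^{n,1}$ is $\mathbb{R}^{n+1}$ with the metric $-dx_1^2+dx_2^2+\dots+dx_{n+1}^2$. A surface is timelike if the induced metric has signature $(1,1)$; a vector $v$ is lightlike if $v\ne0$ and $\langle v,v\rangle=0$. For a constant vector $Z$, $Z=Z^\top+Z^\perp$ along $M$ (tangent and normal parts); $M$ has a canonical null direction with respect to $Z$ if $Z^\top$ is lightlike everywhere on $M$. Since the tangent planes are Lorentzian, there is a unique lightlike tangent field $W$ with $\langle Z^\top,W\rangle=-1$. $\nabla$ is the Levi-Civita connection of $M$ and $II$ its second fundamental form. *)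

From Stdlib Require Import Reals.
Open Scope R_scope.

(** Vectors of R^{n,1}: coordinates x 0, ..., x n (index 0 is the timelike one);
    values at indices > n are irrelevant. *)
Definition vec := nat -> R.
Definition vzero : vec := fun _ => 0.
Definition vadd (x y : vec) : vec := fun i => x i + y i.
Definition vsub (x y : vec) : vec := fun i => x i - y i.
Definition vscal (c : R) (x : vec) : vec := fun i => c * x i.
Definition veq (n : nat) (x y : vec) : Prop := forall i, (i <= n)%nat -> x i = y i.

Definition mink (n : nat) (x y : vec) : R :=
  sum_f_R0 (fun i => (if Nat.eqb i 0 then -1 else 1) * (x i * y i)) n.

Definition lightlike (n : nat) (v : vec) : Prop := ~ veq n v vzero /\ mink n v v = 0.

Definition gE n (Xu Xv : vec) := mink n Xu Xu.
Definition gF n (Xu Xv : vec) := mink n Xu Xv.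
Definition gG n (Xu Xv : vec) := mink n Xv Xv.
Definition gdet n (Xu Xv : vec) := gE n Xu Xv * gG n Xu Xv - gF n Xu Xv * gF n Xu Xv.

(** A 2x2 symmetric form has signature (1,1) iff its determinant is negative. *)
Definition timelike_plane n (Xu Xv : vec) : Prop := gdet n Xu Xv < 0.

(** Coordinates (w.r.t. Xu, Xv) of the orthogonal (tangential) projection of w
    onto the nondegenerate plane spanned by Xu, Xv: inverse metric applied to
    (<w,Xu>, <w,Xv>). *)
Definition tc1 n (Xu Xv w : vec) : R :=
  (gG n Xu Xv * mink n w Xu - gF n Xu Xv * mink n w Xv) / gdet n Xu Xv.
Definition tc2 n (Xu Xv w : vec) : R :=
  (gE n Xu Xv * mink n w Xv - gF n Xu Xv * mink n w Xu) / gdet n Xu Xv.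
Definition lincomb (c1 c2 : R) (Xu Xv : vec) : vec := vadd (vscal c1 Xu) (vscal c2 Xv).
Definition tanpart n (Xu Xv w : vec) : vec := lincomb (tc1 n Xu Xv w) (tc2 n Xu Xv w) Xu Xv.
Definition norpart n (Xu Xv w : vec) : vec := vsub w (tanpart n Xu Xv w).

Definition partial_u (n : nat) (U : R -> R -> Prop) (F DF : R -> R -> vec) : Prop :=
  forall u v, U u v -> forall i, (i <= n)%nat ->
    derivable_pt_lim (fun s => F s v i) u (DF u v i).
Definition partial_v (n : nat) (U : R -> R -> Prop) (F DF : R -> R -> vec) : Prop :=
  forall u v, U u v -> forall i, (i <= n)%nat ->
    derivable_pt_lim (fun t => F u t i) v (DF u v i).

Definition cont2 (n : nat) (U : R -> R -> Prop) (F : R -> R -> vec) : Prop :=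
  forall u v, U u v -> forall i, (i <= n)%nat -> forall eps, eps > 0 ->
    exists delta, delta > 0 /\ forall s t, Rabs (s - u) < delta -> Rabs (t - v) < delta ->
      Rabs (F s t i - F u v i) < eps.

Definition open2 (U : R -> R -> Prop) : Prop :=
  forall u v, U u v -> exists eps, eps > 0 /\
    forall s t, Rabs (s - u) < eps -> Rabs (t - v) < eps -> U s t.

Definition has_partials (f : R -> R -> R) (u v fu fv : R) : Prop :=
  derivable_pt_lim (fun s => f s v) u fu /\ derivable_pt_lim (fun t => f u t) v fv.

(** Ambient (flat) directional derivative D_Y V at a point, where
    Y = y1 Xu + y2 Xv and V = c1 Xu + c2 Xv, c1, c2 having partials
    (c1u, c1v), (c2u, c2v) there; Xuu = d_u Xu, Xuv = d_v Xu, Xvu = d_u Xv,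
    Xvv = d_v Xv. *)
Definition dirderiv (Xu Xv Xuu Xuv Xvu Xvv : vec)
  (y1 y2 c1 c2 c1u c1v c2u c2v : R) : vec :=
  vadd (vscal y1 (vadd (vadd (vscal c1u Xu) (vscal c1 Xuu)) (vadd (vscal c2u Xv) (vscal c2 Xvu))))
       (vscal y2 (vadd (vadd (vscal c1v Xu) (vscal c1 Xuv)) (vadd (vscal c2v Xv) (vscal c2 Xvv)))).

Definition zt1 n (Xu Xv : R -> R -> vec) (Z : vec) : R -> R -> R :=
  fun u v => tc1 n (Xu u v) (Xv u v) Z.
Definition zt2 n (Xu Xv : R -> R -> vec) (Z : vec) : R -> R -> R :=
  fun u v => tc2 n (Xu u v) (Xv u v) Z.

(** Levi-Civita connection of M: nabla_Y V = (D_Y V)^T (Gauss formula);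
    II(Y,V) = (D_Y V)^perp; Lie bracket in local coordinates:
    [Y,V] = (Y(v1) - V(y1)) Xu + (Y(v2) - V(y2)) Xv. *)
Definition conclusion_at n (Xu Xv Xuu Xuv Xvu Xvv : R -> R -> vec) (Z : vec)
  (w1 w2 : R -> R -> R) (u v : R) : Prop :=
  let xu := Xu u v in let xv := Xv u v in
  let xuu := Xuu u v in let xuv := Xuv u v in let xvu := Xvu u v in let xvv := Xvv u v in
  let z1 := zt1 n Xu Xv Z u v in let z2 := zt2 n Xu Xv Z u v in
  let a1 := w1 u v in let a2 := w2 u v in
  let ZT := lincomb z1 z2 xu xv in
  let W := lincomb a1 a2 xu xv in
  exists z1u z1v z2u z2v a1u a1v a2u a2v : R,
    has_partials (zt1 n Xu Xv Z) u v z1u z1v /\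
    has_partials (zt2 n Xu Xv Z) u v z2u z2v /\
    has_partials w1 u v a1u a1v /\
    has_partials w2 u v a2u a2v /\
    let D_ZT_ZT := dirderiv xu xv xuu xuv xvu xvv z1 z2 z1 z2 z1u z1v z2u z2v in
    let D_ZT_W  := dirderiv xu xv xuu xuv xvu xvv z1 z2 a1 a2 a1u a1v a2u a2v in
    let D_W_ZT  := dirderiv xu xv xuu xuv xvu xvv a1 a2 z1 z2 z1u z1v z2u z2v in
    let D_W_W   := dirderiv xu xv xuu xuv xvu xvv a1 a2 a1 a2 a1u a1v a2u a2v in
    let a := mink n (norpart n xu xv D_W_W) (norpart n xu xv Z) in
    let br1 := (z1 * a1u + z2 * a1v) - (a1 * z1u + a2 * z1v) in
    let br2 := (z1 * a2u + z2 * a2v) - (a1 * z2u + a2 * z2v) in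
    veq n (tanpart n xu xv D_ZT_ZT) vzero /\
    veq n (tanpart n xu xv D_ZT_W) vzero /\
    veq n (tanpart n xu xv D_W_ZT) (vscal (- a) ZT) /\
    veq n (tanpart n xu xv D_W_W) (vscal a W) /\
    veq n (lincomb br1 br2 xu xv) (vscal a ZT).

From Stdlib Require Import Reals Lra Lia FunctionalExtensionality.
From Coquelicot Require Import Coquelicot.
Open Scope R_scope.

(* Differentiating <Z^T,Z^T> = 0, <Z^T,W> = -1, <W,W> = 0 and <Z^T,X_k> = <Z,X_k> along
   the coordinate lines shows that <D_Y Z^T, V> = sff(Y,V) := <II(Y,V), Z^perp>, that
   <D_Y Z^T, Z^T> = <D_Y W, W> = 0 and that <D_Y W, Z^T> = -<D_Y Z^T, W>.  By Schwarz's
   theorem sff is symmetric, so sff(Z^T, .) = 0 and the only nonzero value of sff on the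
   null frame (Z^T, W) is sff(W,W) = a.  A tangent vector is determined by its pairings
   with the null frame, which gives the four covariant derivatives; the bracket is
   nabla_{Z^T} W - nabla_W Z^T.  The coordinates of W are differentiable because W is
   an explicit rational expression in the metric and Z (the null partner of Z^T). *)

Lemma mink_sym n x y : mink n x y = mink n y x.
Proof. unfold mink. apply sum_eq. intros; ring. Qed.

Lemma mink_add_l n x y z : mink n (vadd x y) z = mink n x z + mink n y z.
Proof. unfold mink, vadd. rewrite <- plus_sum. apply sum_eq. intros; ring. Qed.

Lemma mink_sub_l n x y z : mink n (vsub x y) z = mink n x z - mink n y z.
Proof. unfold mink, vsub. rewrite <- minus_sum. apply sum_eq. intros; ring. Qed.

Lemma mink_scal_l n c x z : mink n (vscal c x) z = c * mink n x z.
Proof. unfold mink, vscal. rewrite scal_sum. apply sum_eq. intros; ring. Qed.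

Lemma mink_vzero_l n z : mink n vzero z = 0.
Proof. unfold mink, vzero. induction n as [|n IH]; simpl; [|rewrite IH]; ring. Qed.

Lemma mink_add_r n x y z : mink n z (vadd x y) = mink n z x + mink n z y.
Proof. rewrite !(mink_sym n z). apply mink_add_l. Qed.

Lemma mink_scal_r n c x z : mink n z (vscal c x) = c * mink n z x.
Proof. rewrite !(mink_sym n z). apply mink_scal_l. Qed.

Lemma mink_ext n x x' y y' : veq n x x' -> veq n y y' -> mink n x y = mink n x' y'.
Proof.
  intros Hx Hy. unfold mink. apply sum_eq. intros i Hi. rewrite Hx, Hy by exact Hi. reflexivity.
Qed.

Lemma mink_lincomb_l n c1 c2 x y z :
  mink n (lincomb c1 c2 x y) z = c1 * mink n x z + c2 * mink n y z.
Proof. unfold lincomb. rewrite mink_add_l, !mink_scal_l. reflexivity. Qed.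

Lemma mink_lincomb_r n c1 c2 x y z :
  mink n z (lincomb c1 c2 x y) = c1 * mink n z x + c2 * mink n z y.
Proof. rewrite !(mink_sym n z). apply mink_lincomb_l. Qed.

Lemma veq_refl n x : veq n x x.
Proof. intros i _. reflexivity. Qed.

Lemma lincomb_lincomb al be z1 z2 a1 a2 xu xv :
  lincomb (al * z1 + be * a1) (al * z2 + be * a2) xu xv =
  vadd (vscal al (lincomb z1 z2 xu xv)) (vscal be (lincomb a1 a2 xu xv)).
Proof. apply functional_extensionality. intros i. unfold lincomb, vadd, vscal. ring. Qed.

Lemma mink_tanpart_xu n xu xv w :
  gdet n xu xv <> 0 -> mink n (tanpart n xu xv w) xu = mink n w xu.
Proof.
  intros HD. unfold tanpart. rewrite mink_lincomb_l. unfold tc1, tc2.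
  unfold gdet, gE, gF, gG in *. rewrite (mink_sym n xv xu). field. exact HD.
Qed.

Lemma mink_tanpart_xv n xu xv w :
  gdet n xu xv <> 0 -> mink n (tanpart n xu xv w) xv = mink n w xv.
Proof.
  intros HD. unfold tanpart. rewrite mink_lincomb_l. unfold tc1, tc2.
  unfold gdet, gE, gF, gG in *. field. exact HD.
Qed.

Lemma mink_norpart_xu {n} xu xv w : gdet n xu xv <> 0 -> mink n (norpart n xu xv w) xu = 0.
Proof. intros HD. unfold norpart. rewrite mink_sub_l, mink_tanpart_xu by exact HD. ring. Qed.

Lemma mink_norpart_xv {n} xu xv w : gdet n xu xv <> 0 -> mink n (norpart n xu xv w) xv = 0.
Proof. intros HD. unfold norpart. rewrite mink_sub_l, mink_tanpart_xv by exact HD. ring. Qed.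

Lemma mink_norpart_lincomb n xu xv w c1 c2 :
  gdet n xu xv <> 0 -> mink n (norpart n xu xv w) (lincomb c1 c2 xu xv) = 0.
Proof.
  intros HD. rewrite mink_lincomb_r, mink_norpart_xu, mink_norpart_xv by exact HD. ring.
Qed.

Lemma mink_norpart_norpart n xu xv X Y : gdet n xu xv <> 0 ->
  mink n (norpart n xu xv X) (norpart n xu xv Y) = mink n X (norpart n xu xv Y).
Proof.
  intros HD. unfold norpart at 1. rewrite mink_sub_l, (mink_sym n (tanpart n xu xv X)).
  unfold tanpart at 1. rewrite mink_norpart_lincomb by exact HD. ring.
Qed.

Lemma tanpart_ext n xu xv X Y :
  mink n X xu = mink n Y xu -> mink n X xv = mink n Y xv ->
  tanpart n xu xv X = tanpart n xu xv Y.
Proof. intros Hu Hv. unfold tanpart, tc1, tc2. rewrite Hu, Hv. reflexivity. Qed.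

Lemma tanpart_lincomb n xu xv c1 c2 : gdet n xu xv <> 0 ->
  tanpart n xu xv (lincomb c1 c2 xu xv) = lincomb c1 c2 xu xv.
Proof.
  intros HD. unfold tanpart. f_equal; unfold tc1, tc2; rewrite !mink_lincomb_l;
  unfold gdet, gE, gF, gG in *; rewrite (mink_sym n xv xu); field; exact HD.
Qed.

Lemma mink_lincomb_gram_det n xu xv z1 z2 a1 a2 :
  let Zt := lincomb z1 z2 xu xv in let W := lincomb a1 a2 xu xv in
  mink n Zt W ^ 2 - mink n Zt Zt * mink n W W = - gdet n xu xv * (z1 * a2 - z2 * a1) ^ 2.
Proof.
  intros Zt W. unfold Zt, W, gdet, gE, gF, gG.
  rewrite !mink_lincomb_l, !mink_lincomb_r, (mink_sym n xv xu). ring.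
Qed.

Lemma null_frame_det_neq0 n xu xv z1 z2 a1 a2 :
  mink n (lincomb z1 z2 xu xv) (lincomb z1 z2 xu xv) = 0 ->
  mink n (lincomb a1 a2 xu xv) (lincomb a1 a2 xu xv) = 0 ->
  mink n (lincomb z1 z2 xu xv) (lincomb a1 a2 xu xv) = -1 ->
  z1 * a2 - z2 * a1 <> 0.
Proof.
  intros Hz Ha Hza Hdet. pose proof (mink_lincomb_gram_det n xu xv z1 z2 a1 a2) as G.
  cbv zeta in G. rewrite Hz, Ha, Hza, Hdet in G. lra.
Qed.

Lemma mink_eq_of_basis n xu xv z1 z2 a1 a2 X Y :
  z1 * a2 - z2 * a1 <> 0 ->
  mink n X (lincomb z1 z2 xu xv) = mink n Y (lincomb z1 z2 xu xv) ->
  mink n X (lincomb a1 a2 xu xv) = mink n Y (lincomb a1 a2 xu xv) ->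
  mink n X xu = mink n Y xu /\ mink n X xv = mink n Y xv.
Proof.
  rewrite !mink_lincomb_r. intros Hdet Hz Ha.
  pose proof (f_equal (Rmult a2) Hz). pose proof (f_equal (Rmult z2) Ha).
  pose proof (f_equal (Rmult a1) Hz). pose proof (f_equal (Rmult z1) Ha).
  split; apply (Rmult_eq_reg_r (z1 * a2 - z2 * a1)); auto; lra.
Qed.

Lemma tanpart_eq_of_basis n xu xv z1 z2 a1 a2 t1 t2 X Y :
  gdet n xu xv <> 0 -> z1 * a2 - z2 * a1 <> 0 ->
  mink n X (lincomb z1 z2 xu xv) = mink n Y (lincomb z1 z2 xu xv) ->
  mink n X (lincomb a1 a2 xu xv) = mink n Y (lincomb a1 a2 xu xv) ->
  veq n Y (lincomb t1 t2 xu xv) -> veq n (tanpart n xu xv X) Y.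
Proof.
  intros HD Hdet Hz Ha HY.
  rewrite (mink_ext n Y _ _ _ HY (veq_refl n _)) in Hz.
  rewrite (mink_ext n Y _ _ _ HY (veq_refl n _)) in Ha.
  destruct (mink_eq_of_basis n xu xv z1 z2 a1 a2 _ _ Hdet Hz Ha) as [Hu Hv].
  rewrite (tanpart_ext n xu xv _ _ Hu Hv), tanpart_lincomb by exact HD.
  intros i Hi. symmetry. exact (HY i Hi).
Qed.

(* Coordinates of -X/s + <X,X>/(2 s^2) Z^T, where s = <X, Z^T>. *)
Definition null_partner_coord (s q x z : R) : R := - / s * x + q / (2 * s ^ 2) * z.

Lemma null_partner_spec n xu xv x1 x2 z1 z2 :
  let X := lincomb x1 x2 xu xv in let Zt := lincomb z1 z2 xu xv in
  let s := mink n X Zt in let q := mink n X X in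
  let W := lincomb (null_partner_coord s q x1 z1) (null_partner_coord s q x2 z2) xu xv in
  mink n Zt Zt = 0 -> s <> 0 -> mink n W W = 0 /\ mink n Zt W = -1.
Proof.
  intros X Zt s q W Hz Hs.
  unfold W, null_partner_coord. rewrite lincomb_lincomb. fold X Zt.
  rewrite !mink_add_l, !mink_add_r, !mink_scal_l, !mink_scal_r, (mink_sym n Zt X).
  fold s q. rewrite Hz. split; field; exact Hs.
Qed.

Lemma null_partner_unique n xu xv z1 z2 a1 a2 b1 b2 :
  let Zt := lincomb z1 z2 xu xv in
  let A := lincomb a1 a2 xu xv in let B := lincomb b1 b2 xu xv in
  mink n Zt Zt = 0 -> mink n A A = 0 -> mink n B B = 0 ->
  mink n Zt A = -1 -> mink n Zt B = -1 -> b1 = a1 /\ b2 = a2.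
Proof.
  intros Zt A B HZ HA HB HZA HZB.
  pose proof (null_frame_det_neq0 n xu xv z1 z2 a1 a2 HZ HA HZA) as Hdet.
  set (al := (b1 * a2 - b2 * a1) / (z1 * a2 - z2 * a1)).
  set (be := (z1 * b2 - z2 * b1) / (z1 * a2 - z2 * a1)).
  assert (Hb1 : b1 = al * z1 + be * a1) by (unfold al, be; field; exact Hdet).
  assert (Hb2 : b2 = al * z2 + be * a2) by (unfold al, be; field; exact Hdet).
  unfold B in HB, HZB. rewrite Hb1, Hb2, lincomb_lincomb in HB, HZB. fold Zt A in HB, HZB.
  rewrite !mink_add_l, !mink_add_r, !mink_scal_l, !mink_scal_r, (mink_sym n A Zt) in HB.
  rewrite mink_add_r, !mink_scal_r in HZB.
  rewrite HZ, HA, HZA in HB. rewrite HZ, HZA in HZB.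
  assert (Hbe : be = 1) by lra.
  assert (Hal : al = 0) by (rewrite Hbe in HB; lra).
  rewrite Hb1, Hb2, Hal, Hbe. split; ring.
Qed.

Record canonical_null_frame n (xu xv Z : vec) (a1 a2 : R) : Prop := {
  frame_timelike : timelike_plane n xu xv;
  frame_ZT_lightlike : lightlike n (tanpart n xu xv Z);
  frame_W_lightlike : lightlike n (lincomb a1 a2 xu xv);
  frame_ZT_W : mink n (tanpart n xu xv Z) (lincomb a1 a2 xu xv) = -1 }.
Arguments frame_timelike {n xu xv Z a1 a2}.
Arguments frame_ZT_lightlike {n xu xv Z a1 a2}.
Arguments frame_W_lightlike {n xu xv Z a1 a2}.
Arguments frame_ZT_W {n xu xv Z a1 a2}.

Lemma null_frame_gdet_neq0 {n xu xv Z a1 a2} :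
  canonical_null_frame n xu xv Z a1 a2 -> gdet n xu xv <> 0.
Proof. intros Hf. pose proof (frame_timelike Hf) as HT. unfold timelike_plane in HT. lra. Qed.

(* A smooth choice of X with <X, Z^T> = <Z,xu>^2 + <Z,xv>^2, nonzero as Z^T <> 0. *)
Definition covariant_lift n (xu xv Z : vec) : vec :=
  lincomb (mink n Z xu) (mink n Z xv) xu xv.

Lemma null_frame_lift_neq0 n xu xv Z a1 a2 :
  canonical_null_frame n xu xv Z a1 a2 ->
  mink n (covariant_lift n xu xv Z) (tanpart n xu xv Z) <> 0.
Proof.
  intros Hf. pose proof (null_frame_gdet_neq0 Hf) as HD.
  destruct Hf as [_ [HZT _] _ _].
  unfold covariant_lift. rewrite mink_lincomb_l, !(mink_sym n _ (tanpart n xu xv Z)).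
  rewrite mink_tanpart_xu, mink_tanpart_xv by exact HD.
  intros Hs. apply HZT.
  assert (Hp : mink n Z xu = 0) by nra. assert (Hq : mink n Z xv = 0) by nra.
  intros i _. unfold tanpart, tc1, tc2, lincomb, vadd, vscal, vzero.
  rewrite Hp, Hq. unfold Rdiv. ring.
Qed.

Lemma null_frame_coords_eq_partner n xu xv Z a1 a2 :
  canonical_null_frame n xu xv Z a1 a2 ->
  let X := covariant_lift n xu xv Z in let Zt := tanpart n xu xv Z in
  a1 = null_partner_coord (mink n X Zt) (mink n X X) (mink n Z xu) (tc1 n xu xv Z) /\
  a2 = null_partner_coord (mink n X Zt) (mink n X X) (mink n Z xv) (tc2 n xu xv Z).
Proof.
  intros Hf X Zt. pose proof (null_frame_lift_neq0 _ _ _ _ _ _ Hf) as Hs.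
  destruct Hf as [_ [_ HZT] [_ HW] HZW].
  destruct (null_partner_spec n xu xv (mink n Z xu) (mink n Z xv)
              (tc1 n xu xv Z) (tc2 n xu xv Z) HZT Hs) as [HP HZP].
  exact (null_partner_unique n xu xv _ _ _ _ a1 a2 HZT HP HW HZP HZW).
Qed.

Definition is_derive_vec n (c : R -> vec) (s0 : R) (dc : vec) : Prop :=
  forall i, (i <= n)%nat -> is_derive (fun s => c s i) s0 (dc i).

Lemma is_derive_vec_const n (c : vec) s0 : is_derive_vec n (fun _ => c) s0 vzero.
Proof. intros i _. exact (is_derive_const (c i) s0). Qed.

Lemma is_derive_vec_sub n A B dA dB s0 :
  is_derive_vec n A s0 dA -> is_derive_vec n B s0 dB ->
  is_derive_vec n (fun s => vsub (A s) (B s)) s0 (vsub dA dB).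
Proof.
  intros HA HB i Hi. apply (is_derive_minus (fun s => A s i) (fun s => B s i)); auto.
Qed.

Definition lincomb_deriv (c1 c2 dc1 dc2 : R) (x y dx dy : vec) : vec :=
  vadd (vadd (vscal dc1 x) (vscal c1 dx)) (vadd (vscal dc2 y) (vscal c2 dy)).

Lemma is_derive_lincomb n c1 c2 dc1 dc2 x y dx dy s0 :
  is_derive c1 s0 dc1 -> is_derive c2 s0 dc2 ->
  is_derive_vec n x s0 dx -> is_derive_vec n y s0 dy ->
  is_derive_vec n (fun s => lincomb (c1 s) (c2 s) (x s) (y s)) s0
    (lincomb_deriv (c1 s0) (c2 s0) dc1 dc2 (x s0) (y s0) dx dy).
Proof.
  intros H1 H2 Hx Hy i Hi. unfold lincomb, lincomb_deriv, vadd, vscal.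
  apply (is_derive_plus (fun s => c1 s * x s i) (fun s => c2 s * y s i));
    apply Derive.is_derive_mult; auto.
Qed.

Lemma is_derive_sum_f_R0 (f : nat -> R -> R) (df : nat -> R) n s0 :
  (forall i, (i <= n)%nat -> is_derive (f i) s0 (df i)) ->
  is_derive (fun s => sum_f_R0 (fun i => f i s) n) s0 (sum_f_R0 df n).
Proof.
  intros Hf. induction n as [|n IH]; simpl.
  - apply Hf. lia.
  - apply (is_derive_plus (fun s => sum_f_R0 (fun i => f i s) n) (f (S n))).
    + apply IH. intros i Hi. apply Hf. lia.
    + apply Hf. lia.
Qed.

Lemma is_derive_mink n A B dA dB s0 :
  is_derive_vec n A s0 dA -> is_derive_vec n B s0 dB ->
  is_derive (fun s => mink n (A s) (B s)) s0 (mink n dA (B s0) + mink n (A s0) dB).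
Proof.
  intros HA HB. unfold mink. rewrite <- plus_sum.
  erewrite sum_eq by (intros; symmetry; apply Rmult_plus_distr_l).
  apply (is_derive_sum_f_R0
           (fun i s => (if Nat.eqb i 0 then -1 else 1) * (A s i * B s i))).
  intros i Hi. apply is_derive_scal. apply Derive.is_derive_mult; auto.
Qed.

Lemma is_derive_locally_const (f : R -> R) s0 c l :
  locally s0 (fun s => f s = c) -> is_derive f s0 l -> l = 0.
Proof.
  intros Hc Hf. rewrite <- (is_derive_unique _ _ _ (is_derive_ext_loc _ _ _ _ Hc Hf)).
  apply Derive_const.
Qed.

Lemma mink_deriv_locally_const n A B dA dB s0 c :
  is_derive_vec n A s0 dA -> is_derive_vec n B s0 dB ->
  locally s0 (fun s => mink n (A s) (B s) = c) ->
  mink n dA (B s0) + mink n (A s0) dB = 0.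
Proof.
  intros HA HB Hc. eapply is_derive_locally_const; [exact Hc|]. apply is_derive_mink; auto.
Qed.

Lemma ex_derive_cramer (E F G p q : R -> R) s0 :
  ex_derive E s0 -> ex_derive F s0 -> ex_derive G s0 -> ex_derive p s0 -> ex_derive q s0 ->
  E s0 * G s0 - F s0 * F s0 <> 0 ->
  ex_derive (fun s => (G s * p s - F s * q s) / (E s * G s - F s * F s)) s0 /\
  ex_derive (fun s => (E s * q s - F s * p s) / (E s * G s - F s * F s)) s0.
Proof. intros. split; auto_derive; tauto. Qed.

Lemma ex_derive_null_partner_coord (s q x z : R -> R) s0 :
  ex_derive s s0 -> ex_derive q s0 -> ex_derive x s0 -> ex_derive z s0 -> s s0 <> 0 ->
  ex_derive (fun t => null_partner_coord (s t) (q t) (x t) (z t)) s0.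
Proof.
  intros Hs Hq Hx Hz Hs0. unfold null_partner_coord. auto_derive.
  repeat split; try assumption. intros H. apply Hs0. nra.
Qed.

Lemma ex_derive_mink n A B dA dB s0 :
  is_derive_vec n A s0 dA -> is_derive_vec n B s0 dB ->
  ex_derive (fun s => mink n (A s) (B s)) s0.
Proof. intros HA HB. eexists. exact (is_derive_mink n A B dA dB s0 HA HB). Qed.

Lemma ex_derive_tanpart_coords n xu xv dxu dxv w s0 :
  is_derive_vec n xu s0 dxu -> is_derive_vec n xv s0 dxv -> gdet n (xu s0) (xv s0) <> 0 ->
  ex_derive (fun s => tc1 n (xu s) (xv s) w) s0 /\
  ex_derive (fun s => tc2 n (xu s) (xv s) w) s0.
Proof.
  intros Hu Hv HD. pose proof (is_derive_vec_const n w s0) as Hw.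
  exact (ex_derive_cramer
           (fun s => gE n (xu s) (xv s)) (fun s => gF n (xu s) (xv s))
           (fun s => gG n (xu s) (xv s)) (fun s => mink n w (xu s)) (fun s => mink n w (xv s)) s0
           (ex_derive_mink n _ _ _ _ s0 Hu Hu) (ex_derive_mink n _ _ _ _ s0 Hu Hv)
           (ex_derive_mink n _ _ _ _ s0 Hv Hv) (ex_derive_mink n _ _ _ _ s0 Hw Hu)
           (ex_derive_mink n _ _ _ _ s0 Hw Hv) HD).
Qed.

Lemma ex_derive_null_frame_coords n xu xv dxu dxv Z w1 w2 s0 :
  is_derive_vec n xu s0 dxu -> is_derive_vec n xv s0 dxv ->
  locally s0 (fun s => canonical_null_frame n (xu s) (xv s) Z (w1 s) (w2 s)) ->
  ex_derive w1 s0 /\ ex_derive w2 s0.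
Proof.
  intros Hu Hv Hf. pose proof (locally_singleton _ _ Hf) as Hf0.
  destruct (ex_derive_tanpart_coords n xu xv dxu dxv Z s0 Hu Hv (null_frame_gdet_neq0 Hf0))
    as [[dz1 Hz1] [dz2 Hz2]].
  pose proof (is_derive_vec_const n Z s0) as HZ.
  pose proof (is_derive_mink n _ _ _ _ s0 HZ Hu) as Hp.
  pose proof (is_derive_mink n _ _ _ _ s0 HZ Hv) as Hq.
  pose proof (is_derive_lincomb n _ _ _ _ xu xv dxu dxv s0 Hp Hq Hu Hv) as HX.
  pose proof (is_derive_lincomb n _ _ _ _ xu xv dxu dxv s0 Hz1 Hz2 Hu Hv) as HZT.
  set (X := fun s => covariant_lift n (xu s) (xv s) Z).
  set (s := fun t => mink n (X t) (tanpart n (xu t) (xv t) Z)).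
  set (q := fun t => mink n (X t) (X t)).
  assert (Hs : ex_derive s s0) by exact (ex_derive_mink n _ _ _ _ s0 HX HZT).
  assert (Hq' : ex_derive q s0) by exact (ex_derive_mink n _ _ _ _ s0 HX HX).
  pose proof (null_frame_lift_neq0 _ _ _ _ _ _ Hf0) as Hs0.
  split.
  - apply (ex_derive_ext_loc (fun t =>
      null_partner_coord (s t) (q t) (mink n Z (xu t)) (tc1 n (xu t) (xv t) Z))).
    + apply (filter_imp _ _ (fun t Ht =>
        eq_sym (proj1 (null_frame_coords_eq_partner _ _ _ _ _ _ Ht))) Hf).
    + apply ex_derive_null_partner_coord; try assumption; eexists; eassumption.
  - apply (ex_derive_ext_loc (fun t =>
      null_partner_coord (s t) (q t) (mink n Z (xv t)) (tc2 n (xu t) (xv t) Z))).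
    + apply (filter_imp _ _ (fun t Ht =>
        eq_sym (proj2 (null_frame_coords_eq_partner _ _ _ _ _ _ Ht))) Hf).
    + apply ex_derive_null_partner_coord; try assumption; eexists; eassumption.
Qed.

Definition frame_deriv_identities n (xu xv dxu dxv Z : vec) (a1 a2 dz1 dz2 da1 da2 : R) : Prop :=
  let z1 := tc1 n xu xv Z in let z2 := tc2 n xu xv Z in
  let ZT := lincomb z1 z2 xu xv in let W := lincomb a1 a2 xu xv in
  let dZT := lincomb_deriv z1 z2 dz1 dz2 xu xv dxu dxv in
  let dW := lincomb_deriv a1 a2 da1 da2 xu xv dxu dxv in
  mink n dZT ZT = 0 /\ mink n dZT W + mink n ZT dW = 0 /\ mink n dW W = 0 /\
  mink n dZT xu = mink n (norpart n xu xv Z) dxu /\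
  mink n dZT xv = mink n (norpart n xu xv Z) dxv.

Lemma null_frame_curve_identities n xu xv dxu dxv Z w1 w2 s0 dz1 dz2 da1 da2 :
  is_derive_vec n xu s0 dxu -> is_derive_vec n xv s0 dxv ->
  locally s0 (fun s => canonical_null_frame n (xu s) (xv s) Z (w1 s) (w2 s)) ->
  is_derive (fun s => tc1 n (xu s) (xv s) Z) s0 dz1 ->
  is_derive (fun s => tc2 n (xu s) (xv s) Z) s0 dz2 ->
  is_derive w1 s0 da1 -> is_derive w2 s0 da2 ->
  frame_deriv_identities n (xu s0) (xv s0) dxu dxv Z (w1 s0) (w2 s0) dz1 dz2 da1 da2.
Proof.
  intros Hu Hv Hf Hz1 Hz2 Ha1 Ha2.
  pose proof (is_derive_lincomb n _ _ _ _ xu xv dxu dxv s0 Hz1 Hz2 Hu Hv) as DZ.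
  pose proof (is_derive_lincomb n _ _ _ _ xu xv dxu dxv s0 Ha1 Ha2 Hu Hv) as DW.
  pose proof (is_derive_vec_sub n _ _ _ _ s0 (is_derive_vec_const n Z s0) DZ) as DN.
  pose proof (mink_deriv_locally_const n _ _ _ _ s0 0 DZ DZ
    (filter_imp _ _ (fun s Hs => proj2 (frame_ZT_lightlike Hs)) Hf)) as HZZ.
  pose proof (mink_deriv_locally_const n _ _ _ _ s0 (-1) DZ DW
    (filter_imp _ _ (fun s Hs => frame_ZT_W Hs) Hf)) as HZW.
  pose proof (mink_deriv_locally_const n _ _ _ _ s0 0 DW DW
    (filter_imp _ _ (fun s Hs => proj2 (frame_W_lightlike Hs)) Hf)) as HWW.
  pose proof (mink_deriv_locally_const n _ _ _ _ s0 0 DN Hu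
    (filter_imp _ _ (fun s Hs => mink_norpart_xu _ _ Z (null_frame_gdet_neq0 Hs)) Hf)) as HNu.
  pose proof (mink_deriv_locally_const n _ _ _ _ s0 0 DN Hv
    (filter_imp _ _ (fun s Hs => mink_norpart_xv _ _ Z (null_frame_gdet_neq0 Hs)) Hf)) as HNv.
  cbv beta in HZZ, HZW, HWW, HNu, HNv.
  rewrite (mink_sym n (lincomb _ _ (xu s0) (xv s0))) in HZZ.
  rewrite (mink_sym n (lincomb _ _ (xu s0) (xv s0))) in HWW.
  rewrite mink_sub_l, mink_vzero_l in HNu, HNv.
  unfold frame_deriv_identities, norpart, tanpart. repeat split; lra.
Qed.

Lemma null_frame_curve_derivatives n xu xv dxu dxv Z w1 w2 s0 :
  is_derive_vec n xu s0 dxu -> is_derive_vec n xv s0 dxv ->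
  locally s0 (fun s => canonical_null_frame n (xu s) (xv s) Z (w1 s) (w2 s)) ->
  exists dz1 dz2 da1 da2,
    is_derive (fun s => tc1 n (xu s) (xv s) Z) s0 dz1 /\
    is_derive (fun s => tc2 n (xu s) (xv s) Z) s0 dz2 /\
    is_derive w1 s0 da1 /\ is_derive w2 s0 da2 /\
    frame_deriv_identities n (xu s0) (xv s0) dxu dxv Z (w1 s0) (w2 s0) dz1 dz2 da1 da2.
Proof.
  intros Hu Hv Hf.
  destruct (ex_derive_tanpart_coords n xu xv dxu dxv Z s0 Hu Hv
              (null_frame_gdet_neq0 (locally_singleton _ _ Hf))) as [[dz1 Hz1] [dz2 Hz2]].
  destruct (ex_derive_null_frame_coords n xu xv dxu dxv Z w1 w2 s0 Hu Hv Hf)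
    as [[da1 Ha1] [da2 Ha2]].
  exists dz1, dz2, da1, da2. refine (conj Hz1 (conj Hz2 (conj Ha1 (conj Ha2 _)))).
  exact (null_frame_curve_identities n xu xv dxu dxv Z w1 w2 s0 _ _ _ _ Hu Hv Hf Hz1 Hz2 Ha1 Ha2).
Qed.

Definition coord_hessian (xuu xuv xvu xvv : vec) (y1 y2 c1 c2 : R) : vec :=
  vadd (vscal y1 (lincomb c1 c2 xuu xvu)) (vscal y2 (lincomb c1 c2 xuv xvv)).

Lemma dirderiv_split xu xv xuu xuv xvu xvv y1 y2 c1 c2 c1u c1v c2u c2v :
  dirderiv xu xv xuu xuv xvu xvv y1 y2 c1 c2 c1u c1v c2u c2v =
  vadd (lincomb (y1 * c1u + y2 * c1v) (y1 * c2u + y2 * c2v) xu xv)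
       (coord_hessian xuu xuv xvu xvv y1 y2 c1 c2).
Proof.
  apply functional_extensionality. intros i.
  unfold dirderiv, coord_hessian, lincomb, vadd, vscal. ring.
Qed.

Lemma mink_dirderiv_l n xu xv xuu xuv xvu xvv y1 y2 c1 c2 c1u c1v c2u c2v x :
  mink n (dirderiv xu xv xuu xuv xvu xvv y1 y2 c1 c2 c1u c1v c2u c2v) x =
  y1 * mink n (lincomb_deriv c1 c2 c1u c2u xu xv xuu xvu) x +
  y2 * mink n (lincomb_deriv c1 c2 c1v c2v xu xv xuv xvv) x.
Proof. unfold dirderiv. rewrite mink_add_l, !mink_scal_l. reflexivity. Qed.

Section NullFrameConnection.

Variables (n : nat) (xu xv xuu xuv xvu xvv Z : vec).
Variables (a1 a2 z1u z1v z2u z2v a1u a1v a2u a2v : R).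
Hypothesis frame : canonical_null_frame n xu xv Z a1 a2.
Hypothesis along_u : frame_deriv_identities n xu xv xuu xvu Z a1 a2 z1u z2u a1u a2u.
Hypothesis along_v : frame_deriv_identities n xu xv xuv xvv Z a1 a2 z1v z2v a1v a2v.
Hypothesis xuv_xvu : veq n xuv xvu.

Local Notation z1 := (tc1 n xu xv Z).
Local Notation z2 := (tc2 n xu xv Z).
Local Notation ZT := (lincomb z1 z2 xu xv).
Local Notation W := (lincomb a1 a2 xu xv).
Local Notation N := (norpart n xu xv Z).
Local Notation D_ZT y1 y2 := (dirderiv xu xv xuu xuv xvu xvv y1 y2 z1 z2 z1u z1v z2u z2v).
Local Notation D_W y1 y2 := (dirderiv xu xv xuu xuv xvu xvv y1 y2 a1 a2 a1u a1v a2u a2v).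
Local Notation sff y1 y2 c1 c2 := (mink n N (coord_hessian xuu xuv xvu xvv y1 y2 c1 c2)).
Local Notation a := (mink n (norpart n xu xv (D_W a1 a2)) N).

Fact frame_gdet : gdet n xu xv <> 0.
Proof. exact (null_frame_gdet_neq0 frame). Qed.

Fact ZT_null : mink n ZT ZT = 0.
Proof. exact (proj2 (frame_ZT_lightlike frame)). Qed.

Fact W_null : mink n W W = 0.
Proof. exact (proj2 (frame_W_lightlike frame)). Qed.

Fact ZT_W : mink n ZT W = -1.
Proof. exact (frame_ZT_W frame). Qed.

Fact frame_det : z1 * a2 - z2 * a1 <> 0.
Proof. exact (null_frame_det_neq0 n xu xv _ _ _ _ ZT_null W_null ZT_W). Qed.

Lemma mink_D_ZT_ZT y1 y2 : mink n (D_ZT y1 y2) ZT = 0.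
Proof.
  destruct along_u as [Hu _], along_v as [Hv _].
  rewrite mink_dirderiv_l, Hu, Hv. ring.
Qed.

Lemma mink_D_ZT_tangent y1 y2 c1 c2 :
  mink n (D_ZT y1 y2) (lincomb c1 c2 xu xv) = sff y1 y2 c1 c2.
Proof.
  destruct along_u as (_ & _ & _ & Huu & Hvu), along_v as (_ & _ & _ & Huv & Hvv).
  rewrite mink_dirderiv_l, !mink_lincomb_r, Huu, Hvu, Huv, Hvv.
  unfold coord_hessian. rewrite mink_add_r, !mink_scal_r, !mink_lincomb_r. ring.
Qed.

Lemma mink_D_W_W y1 y2 : mink n (D_W y1 y2) W = 0.
Proof.
  destruct along_u as (_ & _ & Hu & _), along_v as (_ & _ & Hv & _).
  rewrite mink_dirderiv_l, Hu, Hv. ring.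
Qed.

Lemma mink_D_W_ZT y1 y2 : mink n (D_W y1 y2) ZT = - mink n (D_ZT y1 y2) W.
Proof.
  destruct along_u as (_ & Hu & _), along_v as (_ & Hv & _).
  rewrite !mink_dirderiv_l, !(mink_sym n _ ZT). nra.
Qed.

Lemma sff_sym y1 y2 c1 c2 : sff y1 y2 c1 c2 = sff c1 c2 y1 y2.
Proof.
  apply mink_ext; [apply veq_refl|]. intros i Hi.
  unfold coord_hessian, lincomb, vadd, vscal. rewrite (xuv_xvu i Hi). ring.
Qed.

Lemma sff_ZT y1 y2 : sff y1 y2 z1 z2 = 0.
Proof. rewrite <- mink_D_ZT_tangent. apply mink_D_ZT_ZT. Qed.

Lemma a_eq_sff_W_W : a = sff a1 a2 a1 a2.
Proof.
  rewrite mink_norpart_norpart by exact frame_gdet.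
  rewrite dirderiv_split, mink_add_l, (mink_sym n (lincomb _ _ xu xv)).
  rewrite mink_norpart_lincomb by exact frame_gdet. rewrite mink_sym. ring.
Qed.

Lemma nabla_ZT_ZT : veq n (tanpart n xu xv (D_ZT z1 z2)) vzero.
Proof.
  apply (tanpart_eq_of_basis n xu xv z1 z2 a1 a2 0 0); try exact frame_gdet;
    try exact frame_det.
  - rewrite mink_vzero_l. apply mink_D_ZT_ZT.
  - rewrite mink_vzero_l, mink_D_ZT_tangent, sff_sym. apply sff_ZT.
  - intros i _. unfold lincomb, vadd, vscal, vzero. ring.
Qed.

Lemma nabla_ZT_W : veq n (tanpart n xu xv (D_W z1 z2)) vzero.
Proof.
  apply (tanpart_eq_of_basis n xu xv z1 z2 a1 a2 0 0); try exact frame_gdet;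
    try exact frame_det.
  - rewrite mink_vzero_l, mink_D_W_ZT, mink_D_ZT_tangent, sff_sym, sff_ZT. ring.
  - rewrite mink_vzero_l. apply mink_D_W_W.
  - intros i _. unfold lincomb, vadd, vscal, vzero. ring.
Qed.

Lemma nabla_W_ZT : veq n (tanpart n xu xv (D_ZT a1 a2)) (vscal (- a) ZT).
Proof.
  apply (tanpart_eq_of_basis n xu xv z1 z2 a1 a2 (- a * z1) (- a * z2));
    try exact frame_gdet; try exact frame_det.
  - rewrite mink_scal_l, mink_D_ZT_ZT, ZT_null. ring.
  - rewrite mink_scal_l, mink_D_ZT_tangent, <- a_eq_sff_W_W, ZT_W. ring.
  - intros i _. unfold lincomb, vadd, vscal. ring.
Qed.

Lemma nabla_W_W : veq n (tanpart n xu xv (D_W a1 a2)) (vscal a W).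
Proof.
  apply (tanpart_eq_of_basis n xu xv z1 z2 a1 a2 (a * a1) (a * a2));
    try exact frame_gdet; try exact frame_det.
  - rewrite mink_scal_l, mink_D_W_ZT, mink_D_ZT_tangent, <- a_eq_sff_W_W, (mink_sym n W), ZT_W.
    ring.
  - rewrite mink_scal_l, mink_D_W_W, W_null. ring.
  - intros i _. unfold lincomb, vadd, vscal. ring.
Qed.

Lemma bracket_ZT_W :
  veq n (lincomb ((z1 * a1u + z2 * a1v) - (a1 * z1u + a2 * z1v))
                 ((z1 * a2u + z2 * a2v) - (a1 * z2u + a2 * z2v)) xu xv) (vscal a ZT).
Proof.
  set (br1 := (z1 * a1u + z2 * a1v) - (a1 * z1u + a2 * z1v)).
  set (br2 := (z1 * a2u + z2 * a2v) - (a1 * z2u + a2 * z2v)).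
  assert (Hbr : veq n (lincomb br1 br2 xu xv) (vsub (D_W z1 z2) (D_ZT a1 a2))).
  { intros i Hi. unfold br1, br2, lincomb, vsub, dirderiv, vadd, vscal.
    rewrite (xuv_xvu i Hi). ring. }
  rewrite <- (tanpart_lincomb n xu xv br1 br2) by exact frame_gdet.
  apply (tanpart_eq_of_basis n xu xv z1 z2 a1 a2 (a * z1) (a * z2));
    try exact frame_gdet; try exact frame_det.
  - rewrite (mink_ext n _ _ _ _ Hbr (veq_refl n _)), mink_sub_l, mink_D_W_ZT,
      mink_D_ZT_ZT, mink_D_ZT_tangent, sff_sym, sff_ZT, mink_scal_l, ZT_null. ring.
  - rewrite (mink_ext n _ _ _ _ Hbr (veq_refl n _)), mink_sub_l, mink_D_W_W,
      mink_D_ZT_tangent, <- a_eq_sff_W_W, mink_scal_l, ZT_W. ring.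
  - intros i _. unfold lincomb, vadd, vscal. ring.
Qed.

End NullFrameConnection.

Lemma locally_2d_open2 (U P : R -> R -> Prop) u v :
  open2 U -> U u v -> (forall s t, U s t -> P s t) -> locally_2d P u v.
Proof.
  intros HU Huv HP. destruct (HU u v Huv) as [e [He H]].
  exists (mkposreal e He). intros s t Hs Ht. apply HP, H; assumption.
Qed.

Lemma partial_u_is_derive_vec n U F DF u v :
  partial_u n U F DF -> U u v -> is_derive_vec n (fun s => F s v) u (DF u v).
Proof. intros H Huv i Hi. apply is_derive_Reals. exact (H u v Huv i Hi). Qed.

Lemma partial_v_is_derive_vec n U F DF u v :
  partial_v n U F DF -> U u v -> is_derive_vec n (fun t => F u t) v (DF u v).
Proof. intros H Huv i Hi. apply is_derive_Reals. exact (H u v Huv i Hi). Qed.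

Lemma is_derive_Derive_partial_v n U F DF DDF u v i :
  open2 U -> partial_v n U F DF -> partial_u n U DF DDF -> U u v -> (i <= n)%nat ->
  is_derive (fun s => Derive (fun t => F s t i) v) u (DDF u v i).
Proof.
  intros HU HF HDF Huv Hi. apply (is_derive_ext_loc (fun s => DF s v i)).
  - apply (filter_imp (fun s => U s v)).
    + intros s Hs. symmetry. apply is_derive_unique.
      exact (partial_v_is_derive_vec n U F DF s v HF Hs i Hi).
    + exact (locally_2d_1d_const_y _ _ _ (locally_2d_open2 U U u v HU Huv (fun _ _ H => H))).
  - exact (partial_u_is_derive_vec n U DF DDF u v HDF Huv i Hi).
Qed.

Lemma is_derive_Derive_partial_u n U F DF DDF u v i :
  open2 U -> partial_u n U F DF -> partial_v n U DF DDF -> U u v -> (i <= n)%nat ->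
  is_derive (fun t => Derive (fun s => F s t i) u) v (DDF u v i).
Proof.
  intros HU HF HDF Huv Hi. apply (is_derive_ext_loc (fun t => DF u t i)).
  - apply (filter_imp (fun t => U u t)).
    + intros t Ht. symmetry. apply is_derive_unique.
      exact (partial_u_is_derive_vec n U F DF u t HF Ht i Hi).
    + exact (locally_2d_1d_const_x _ _ _ (locally_2d_open2 U U u v HU Huv (fun _ _ H => H))).
  - exact (partial_v_is_derive_vec n U DF DDF u v HDF Huv i Hi).
Qed.

Lemma cont2_continuity_2d_pt n U F u v i :
  cont2 n U F -> U u v -> (i <= n)%nat -> continuity_2d_pt (fun s t => F s t i) u v.
Proof.
  intros HF Huv Hi eps. destruct (HF u v Huv i Hi eps (cond_pos eps)) as [d [Hd H]].
  exists (mkposreal d Hd). exact H.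
Qed.

Lemma partial_uv_comm n U X Xu Xv Xuv Xvu u v :
  open2 U -> partial_u n U X Xu -> partial_v n U X Xv ->
  partial_v n U Xu Xuv -> partial_u n U Xv Xvu ->
  cont2 n U Xuv -> cont2 n U Xvu -> U u v -> veq n (Xuv u v) (Xvu u v).
Proof.
  intros HU Hu Hv Huv Hvu Cuv Cvu Hp i Hi.
  assert (Euv : forall s t, U s t ->
            Derive (fun z => Derive (fun s' => X s' z i) s) t = Xuv s t i).
  { intros s t Hst. apply is_derive_unique.
    exact (is_derive_Derive_partial_u n U X Xu Xuv s t i HU Hu Huv Hst Hi). }
  assert (Evu : forall s t, U s t ->
            Derive (fun z => Derive (fun t' => X z t' i) t) s = Xvu s t i).
  { intros s t Hst. apply is_derive_unique.
    exact (is_derive_Derive_partial_v n U X Xv Xvu s t i HU Hv Hvu Hst Hi). }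
  rewrite <- (Euv u v Hp), <- (Evu u v Hp). symmetry. apply (Schwarz (fun s t => X s t i)).
  - apply (locally_2d_open2 U); auto. intros s t Hst. repeat split; eexists.
    + exact (partial_u_is_derive_vec n U X Xu s t Hu Hst i Hi).
    + exact (partial_v_is_derive_vec n U X Xv s t Hv Hst i Hi).
    + exact (is_derive_Derive_partial_v n U X Xv Xvu s t i HU Hv Hvu Hst Hi).
    + exact (is_derive_Derive_partial_u n U X Xu Xuv s t i HU Hu Huv Hst Hi).
  - apply (continuity_2d_pt_ext_loc (fun s t => Xvu s t i)).
    + apply (locally_2d_open2 U); auto. intros s t Hst. symmetry. exact (Evu s t Hst).
    + exact (cont2_continuity_2d_pt n U Xvu u v i Cvu Hp Hi).
  - apply (continuity_2d_pt_ext_loc (fun s t => Xuv s t i)).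
    + apply (locally_2d_open2 U); auto. intros s t Hst. symmetry. exact (Euv s t Hst).
    + exact (cont2_continuity_2d_pt n U Xuv u v i Cuv Hp Hi).
Qed.

Theorem mainTheorem3 (n : nat) (U : R -> R -> Prop)
  (X Xu Xv Xuu Xuv Xvu Xvv : R -> R -> vec) (Z : vec) (w1 w2 : R -> R -> R) :
  open2 U ->
  partial_u n U X Xu -> partial_v n U X Xv ->
  partial_u n U Xu Xuu -> partial_v n U Xu Xuv ->
  partial_u n U Xv Xvu -> partial_v n U Xv Xvv ->
  cont2 n U Xuu -> cont2 n U Xuv -> cont2 n U Xvu -> cont2 n U Xvv ->
  (forall u v, U u v -> timelike_plane n (Xu u v) (Xv u v)) ->
  mink n Z Z = 1 ->
  (forall u v, U u v -> lightlike n (tanpart n (Xu u v) (Xv u v) Z)) ->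
  (forall u v, U u v ->
     lightlike n (lincomb (w1 u v) (w2 u v) (Xu u v) (Xv u v)) /\
     mink n (tanpart n (Xu u v) (Xv u v) Z) (lincomb (w1 u v) (w2 u v) (Xu u v) (Xv u v)) = -1) ->
  forall u v, U u v -> conclusion_at n Xu Xv Xuu Xuv Xvu Xvv Z w1 w2 u v.
Proof.
  intros HU HX_u HX_v HXu_u HXu_v HXv_u HXv_v _ Cuv Cvu _ Htime _ HZT HW u v Huv.
  assert (Hframe : forall s t, U s t ->
            canonical_null_frame n (Xu s t) (Xv s t) Z (w1 s t) (w2 s t))
    by (intros s t Hst; destruct (HW s t Hst); split; auto).
  pose proof (locally_2d_open2 _ _ u v HU Huv Hframe) as Hnear.
  destruct (null_frame_curve_derivatives n (fun s => Xu s v) (fun s => Xv s v) (Xuu u v) (Xvu u v)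
              Z (fun s => w1 s v) (fun s => w2 s v) u
              (partial_u_is_derive_vec n U Xu Xuu u v HXu_u Huv)
              (partial_u_is_derive_vec n U Xv Xvu u v HXv_u Huv)
              (locally_2d_1d_const_y _ _ _ Hnear))
    as (z1u & z2u & a1u & a2u & Dz1u & Dz2u & Da1u & Da2u & along_u).
  destruct (null_frame_curve_derivatives n (fun t => Xu u t) (fun t => Xv u t) (Xuv u v) (Xvv u v)
              Z (fun t => w1 u t) (fun t => w2 u t) v
              (partial_v_is_derive_vec n U Xu Xuv u v HXu_v Huv)
              (partial_v_is_derive_vec n U Xv Xvv u v HXv_v Huv)
              (locally_2d_1d_const_x _ _ _ Hnear))
    as (z1v & z2v & a1v & a2v & Dz1v & Dz2v & Da1v & Da2v & along_v).
  pose proof (partial_uv_comm n U X Xu Xv Xuv Xvu u v HU HX_u HX_v HXu_v HXv_u Cuv Cvu Huv)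
    as Hsym.
  pose proof (Hframe u v Huv) as Hf.
  exists z1u, z1v, z2u, z2v, a1u, a1v, a2u, a2v.
  repeat split; try (apply is_derive_Reals; assumption).
  - eapply nabla_ZT_ZT; eassumption.
  - eapply nabla_ZT_W; eassumption.
  - eapply nabla_W_ZT; eassumption.
  - eapply nabla_W_W; eassumption.
  - eapply bracket_ZT_W; eassumption.
Qed.
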